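(* Let $\Omega=\{1,\dots,n\}$ and $f:2^{\Omega}\to\mathbb{R}$. Define $f_1,f_2:2^{\Omega}\to\mathbb{R}$ by $f_1(\mathcal{S})=f(\mathcal{S}^c)$ and $f_2(\mathcal{S})=f(\mathcal{S})+f(\mathcal{S}^c)-f(\Omega)$, where $\mathcal{S}^c=\Omega\setminus\mathcal{S}$. For $\mathcal{A}\subseteq\Omega$ define $f_{\mathcal{A}}:2^{\Omega\setminus\mathcal{A}}\to\mathbb{R}$ by $f_{\mathcal{A}}(\mathcal{S})=f(\mathcal{A}\cup\mathcal{S})$. For a positive integer $q$ dividing $n$, let $\Omega(q)=\{1,\dots,n/q\}$, $\mathcal{S}(i)=\{(i-1)q+1,\dots,iq\}$ for $i\in\Omega(q)$, and $f_q:2^{\Omega(q)}\to\mathbb{R}$, $f_q(\mathcal{S})=f(\bigcup_{i\in\mathcal{S}}\mathcal{S}(i))$. Let $g:2^{\Omega}\to\mathbb{R}$ be modular and define $f\circledast g(\mathcal{S})=\min_{\mathcal{Z}\subseteq\mathcal{S}} f(\mathcal{Z})+g(\mathcal{S}\setminus\mathcal{Z})$. Then (i) $\mathcal{E}[f]=\mathcal{E}[f_1]$; (ii) $2\mathcal{E}[f]\ge\mathcal{E}[f_2]$; (iii) $\mathcal{E}[f]\ge\mathcal{E}[f_{\mathcal{A}}]$; (iv) $\mathcal{E}[f]\ge\mathcal{E}[f_q]$; (v) $\mathcal{E}[f]\ge\mathcal{E}[f\circledast g]$.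
   Context: For a set function $h$ on a finite ground set $V$, $\mathcal{E}[h]=\max_{\mathcal{A},\mathcal{B}\subseteq V} h(\mathcal{A}\cup\mathcal{B})+h(\mathcal{A}\cap\mathcal{B})-h(\mathcal{A})-h(\mathcal{B})$ (the maximum is taken over subsets of the ground set of $h$). A set function $g$ is modular if both $g$ and $-g$ are submodular. *)

From HB Require Import structures.
From mathcomp Require Import all_boot all_order all_algebra.
Set Implicit Arguments. Unset Strict Implicit. Unset Printing Implicit Defensive.
Import Order.TTheory GRing.Theory Num.Theory.
Local Open Scope ring_scope.

Section Defs.
Variable R : realFieldType.

(* E_D[h] : max over A, B subsets of the ground set D of
   h(A u B) + h(A n B) - h(A) - h(B).  The seed value 0 is attained
   (take A = B), so this big max is exactly the maximum. *)
Definition Ecal (T : finType) (D : {set T}) (h : {set T} -> R) : R :=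
  \big[Num.max/0]_(p : {set T} * {set T} | (p.1 \subset D) && (p.2 \subset D))
     (h (p.1 :|: p.2) + h (p.1 :&: p.2) - h p.1 - h p.2).

Definition submodular (T : finType) (h : {set T} -> R) : Prop :=
  forall A B : {set T}, h (A :|: B) + h (A :&: B) <= h A + h B.

Definition modular (T : finType) (g : {set T} -> R) : Prop :=
  submodular g /\ submodular (fun S => - g S).

Definition f1 (T : finType) (f : {set T} -> R) (S : {set T}) : R := f (~: S).
Definition f2 (T : finType) (f : {set T} -> R) (S : {set T}) : R :=
  f S + f (~: S) - f [set: T].
(* f_A(S) = f(A u S), considered on the ground set Omega \ A *)
Definition fres (T : finType) (f : {set T} -> R) (A : {set T}) (S : {set T}) : R :=
  f (A :|: S).

(* block i (0-indexed) of size q in 'I_n: {j | j / q = i},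
   i.e. the 1-indexed {(i-1)q+1, ..., iq} *)
Definition block (n q : nat) (i : 'I_(n %/ q)) : {set 'I_n} :=
  [set j : 'I_n | (j %/ q)%N == i].
Definition fq (n q : nat) (f : {set 'I_n} -> R) (S : {set 'I_(n %/ q)}) : R :=
  f (\bigcup_(i in S) @block n q i).

(* (f conv g)(S) = min_{Z subset S} f(Z) + g(S \ Z); seed f S + g set0 is attained (Z = S) *)
Definition conv (T : finType) (f g : {set T} -> R) (S : {set T}) : R :=
  \big[Num.min/(f S + g set0)]_(Z : {set T} | Z \subset S) (f Z + g (S :\: Z)).

End Defs.

(* Everything rests on the submodularity defect
   h(A u B) + h(A n B) - h(A) - h(B), of which E is the maximum.
   - Composing h with a map of subsets that preserves, or exchanges, unions
     and intersections maps defects of the composite to defects of h, so E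
     cannot increase.  This covers complementation (an involution, whence
     equality for f1), S |-> A u S, and the union-of-blocks map, which
     respects intersections because the blocks are disjoint.
   - The defect is additive in h and vanishes on constants, so
     E[f2] <= E[f] + E[f1] = 2 E[f].
   - For the convolution, take optimal splittings Z_A, Z_B of A and B and
     bound its values at A u B and A n B using Z_A u Z_B and Z_A n Z_B; as g
     is modular all g-terms cancel, leaving the defect of f at (Z_A, Z_B). *)
From HB Require Import structures.
From mathcomp Require Import all_boot all_order all_algebra.
From mathcomp Require Import lra.
Import Order.TTheory GRing.Theory Num.Theory.
Local Open Scope ring_scope.

Set Implicit Arguments.
Unset Strict Implicit.
Unset Printing Implicit Defensive.

Section SubmodularityDefect.
Variable R : realFieldType.
Implicit Types (T U : finType).

Definition defect T (h : {set T} -> R) (A B : {set T}) : R :=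
  h (A :|: B) + h (A :&: B) - h A - h B.

Lemma defect_le_Ecal T (D : {set T}) (h : {set T} -> R) (A B : {set T}) :
  A \subset D -> B \subset D -> defect h A B <= Ecal D h.
Proof. by move=> AD BD; apply: (@le_bigmax_cond _ _ _ _ (A, B)); rewrite /= AD BD. Qed.

Lemma Ecal_ge0 T (D : {set T}) (h : {set T} -> R) : 0 <= Ecal D h.
Proof.
have := defect_le_Ecal h (sub0set D) (sub0set D).
by rewrite /defect setU0 setI0 addrK subrr.
Qed.

Lemma Ecal_le T (D : {set T}) (h : {set T} -> R) (c : R) : 0 <= c ->
  (forall A B : {set T}, A \subset D -> B \subset D -> defect h A B <= c) -> Ecal D h <= c.
Proof. by move=> c_ge0 hc; apply: bigmax_le => // -[A B] /andP[]; apply: hc. Qed.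

Lemma eq_Ecal T (D : {set T}) (h h' : {set T} -> R) :
  h =1 h' -> Ecal D h = Ecal D h'.
Proof. by move=> eq_h; apply: eq_bigr => p _; rewrite /= !eq_h. Qed.

Lemma Ecal_comp_le T U (D : {set T}) (D' : {set U}) (phi : {set U} -> {set T})
    (h : {set T} -> R) :
  (forall S : {set U}, S \subset D' -> phi S \subset D) ->
  (forall A B : {set U}, defect (h \o phi) A B = defect h (phi A) (phi B)) ->
  Ecal D' (h \o phi) <= Ecal D h.
Proof.
move=> phiD defect_phi; apply: Ecal_le; first exact: Ecal_ge0.
by move=> A B AD' BD'; rewrite defect_phi; apply: defect_le_Ecal; apply: phiD.
Qed.

Lemma defect_comp_morph T U (phi : {set U} -> {set T}) (h : {set T} -> R) :
  {morph phi : A B / A :|: B} -> {morph phi : A B / A :&: B} ->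
  forall A B : {set U}, defect (h \o phi) A B = defect h (phi A) (phi B).
Proof. by move=> phiU phiI A B; rewrite /defect /= phiU phiI. Qed.

Lemma defect_comp_antimorph T U (phi : {set U} -> {set T}) (h : {set T} -> R) :
  {morph phi : A B / A :|: B >-> A :&: B} -> {morph phi : A B / A :&: B >-> A :|: B} ->
  forall A B : {set U}, defect (h \o phi) A B = defect h (phi A) (phi B).
Proof. by move=> phiU phiI A B; rewrite /defect /= phiU phiI [_ + h _]addrC. Qed.

Lemma Ecal_f1 T (h : {set T} -> R) : Ecal [set: T] (f1 h) = Ecal [set: T] h.
Proof.
have f1_le (k : {set T} -> R) : Ecal [set: T] (f1 k) <= Ecal [set: T] k.
  apply: (Ecal_comp_le (phi := @setC T)) => [S _|]; first exact: subsetT.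
  exact: defect_comp_antimorph (@setCU T) (@setCI T).
apply/le_anti; rewrite f1_le /=.
by rewrite (eq_Ecal _ (h := h) (h' := f1 (f1 h))) ?f1_le // => S; rewrite /f1 setCK.
Qed.

Lemma Ecal_f2_le T (h : {set T} -> R) : Ecal [set: T] (f2 h) <= 2 * Ecal [set: T] h.
Proof.
apply: Ecal_le => [|A B _ _]; first by rewrite mulr_ge0 ?Ecal_ge0.
have := defect_le_Ecal h (subsetT A) (subsetT B).
have := defect_le_Ecal (f1 h) (subsetT A) (subsetT B).
by rewrite Ecal_f1 /defect /f2 /f1 => le1 le2; lra.
Qed.

Lemma Ecal_fres_le T (D : {set T}) (h : {set T} -> R) (A : {set T}) :
  Ecal D (fres h A) <= Ecal [set: T] h.
Proof.
apply: (Ecal_comp_le (phi := setU A)) => [S _|]; first exact: subsetT.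
exact: defect_comp_morph (@setUUr T A) (@setUIr T A).
Qed.

Lemma bigcup_setI T U (F : U -> {set T}) (X Y : {set U}) :
  (forall i j x, x \in F i -> x \in F j -> i = j) ->
  \bigcup_(i in X :&: Y) F i = (\bigcup_(i in X) F i) :&: (\bigcup_(i in Y) F i).
Proof.
move=> F_disj; apply/setP=> x; rewrite inE; apply/bigcupP/andP.
  by case=> i /setIP[iX iY] Fix; split; apply/bigcupP; exists i.
case=> /bigcupP[i iX Fix] /bigcupP[j jY Fjx].
by exists i; rewrite // inE iX (F_disj i j x).
Qed.

Lemma Ecal_fq_le (n q : nat) (h : {set 'I_n} -> R) :
  Ecal [set: 'I_(n %/ q)] (fq h) <= Ecal [set: 'I_n] h.
Proof.
pose blocks (S : {set 'I_(n %/ q)}) := \bigcup_(i in S) @block n q i.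
apply: (Ecal_comp_le (phi := blocks)) => [S _|]; first exact: subsetT.
apply: defect_comp_morph => X Y; first exact: bigcup_setU.
apply: bigcup_setI => i j x; rewrite !inE => /eqP xi /eqP xj.
by apply: val_inj; rewrite /= -xi -xj.
Qed.

Lemma modular_defect T (g : {set T} -> R) (A B : {set T}) :
  modular g -> defect g A B = 0.
Proof. by case=> /(_ A B) sub /(_ A B) supm; rewrite /defect; lra. Qed.

Lemma modular_setD T (g : {set T} -> R) (S Z : {set T}) :
  modular g -> Z \subset S -> g (S :\: Z) = g S + g set0 - g Z.
Proof.
move=> mod_g ZS; have := modular_defect (S :\: Z) Z mod_g; rewrite /defect.
have -> : (S :\: Z) :|: Z = S by rewrite setUC setDE setUIr setUCr setIT; apply/setUidPr.
have -> : (S :\: Z) :&: Z = set0 by rewrite setDE -setIA [~: Z :&: Z]setIC setICr setI0.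
by move=> eq0; lra.
Qed.

Lemma conv_le T (f g : {set T} -> R) (S Z : {set T}) :
  Z \subset S -> conv f g S <= f Z + g (S :\: Z).
Proof. exact: bigmin_le_cond. Qed.

Lemma conv_attained T (f g : {set T} -> R) (S : {set T}) :
  exists2 Z : {set T}, Z \subset S & conv f g S = f Z + g (S :\: Z).
Proof.
have [Z ZS Z_min] := @arg_minP _ _ _ S (fun Z => Z \subset S)
  (fun Z => f Z + g (S :\: Z)) (subxx S).
exists Z => //; apply/le_anti; rewrite conv_le //=.
apply/bigmin_geP; split; last exact: Z_min.
by rewrite -[g set0](congr1 g (setDv S)); apply: Z_min.
Qed.

Lemma Ecal_conv_le T (D : {set T}) (f g : {set T} -> R) :
  modular g -> Ecal D (conv f g) <= Ecal D f.
Proof.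
move=> mod_g; apply: Ecal_le => [|A B AD BD]; first exact: Ecal_ge0.
have [ZA ZA_A convA] := conv_attained f g A.
have [ZB ZB_B convB] := conv_attained f g B.
have ZU := setUSS ZA_A ZB_B; have ZI := setISS ZA_A ZB_B.
have := conv_le f g ZU; have := conv_le f g ZI.
have := defect_le_Ecal f (subset_trans ZA_A AD) (subset_trans ZB_B BD).
have := modular_defect A B mod_g; have := modular_defect ZA ZB mod_g.
rewrite /defect convA convB !modular_setD //.
by move=> gZ gAB fZ convI convU; lra.
Qed.

End SubmodularityDefect.

Theorem mainTheorem3 (R : realFieldType) (n : nat) (f : {set 'I_n} -> R) :
  [/\ Ecal [set: 'I_n] f = Ecal [set: 'I_n] (f1 f),
      Ecal [set: 'I_n] (f2 f) <= 2 * Ecal [set: 'I_n] f,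
      (forall A : {set 'I_n}, Ecal (~: A) (fres f A) <= Ecal [set: 'I_n] f),
      (forall q : nat, (0 < q)%N -> (q %| n)%N ->
          Ecal [set: 'I_(n %/ q)] (@fq R n q f) <= Ecal [set: 'I_n] f)
    & (forall g : {set 'I_n} -> R, modular g ->
          Ecal [set: 'I_n] (conv f g) <= Ecal [set: 'I_n] f)].
Proof.
split; first by rewrite Ecal_f1.
- exact: Ecal_f2_le.
- by move=> A; apply: Ecal_fres_le.
- by move=> q _ _; apply: Ecal_fq_le.
- by move=> g; apply: Ecal_conv_le.
Qed.
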